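(* Let $D$ be a rank two filtered $(\varphi,N,L/K,E)$-module and let $\underline\eta$ be a standard basis of $D$ (chosen as in Corollary 2.6 when $N\neq0$). Then: (1) If $D$ is F-semisimple and not F-scalar: (a) if $N\neq0$, there is a character $\chi:G\to E^\times$ with $[g]_{\underline\eta}=\mathrm{diag}(\chi(g)\cdot\vec1,\chi(g)\cdot\vec1)$ for all $g\in G$; (b) if $N=0$, there are characters $\chi,\psi:G\to E^\times$ with $[g]_{\underline\eta}=\mathrm{diag}(\chi(g)\cdot\vec1,\psi(g)\cdot\vec1)$ for all $g\in G$. (2) If $D$ is F-scalar, there is a group homomorphism $\lambda:G\to GL_2(E)$ with $[g]_{\underline\eta}=\lambda(g)\cdot\mathrm{diag}(\vec1,\vec1)$ for all $g\in G$ (i.e. the $(r,s)$ entry of $[g]_{\underline\eta}$ is $\lambda(g)_{rs}\cdot\vec1$). (3) If $D$ is non-F-semisimple, there is a character $\chi:G\to E^\times$ with $[g]_{\underline\eta}=\mathrm{diag}(\chi(g)\cdot\vec1,\chi(g)\cdot\vec1)$ for all $g\in G$.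
   Context: $p$ prime; $K/\mathbb{Q}_p$ finite; $L/K$ finite Galois with $G=\mathrm{Gal}(L/K)$; $L_0$ the maximal unramified subextension of $L/\mathbb{Q}_p$, $f=[L_0:\mathbb{Q}_p]$, $\tau$ the absolute Frobenius of $L_0$; $E$ a finite extension of $\mathbb{Q}_p$ containing the images of all embeddings of $L$. Fix $\iota:L_0\hookrightarrow E$ and $\tau_j=\iota\circ\tau^j$; then $L_0\otimes_{\mathbb{Q}_p}E\cong E^f$ via $x\otimes y\mapsto(\tau_j(x)y)_j$, and $\tau\otimes1$ becomes $\varphi(x_0,\dots,x_{f-1})=(x_1,\dots,x_{f-1},x_0)$. For $g\in G$ let $n(g)\in\{0,\dots,f-1\}$ with $g|_{L_0}=\tau^{n(g)}$; $G$ acts on $E^f$ by $g(a_0,\dots,a_{f-1})=(a_{n(g)},a_{n(g)+1},\dots,a_{n(g)+f-1})$ (indices mod $f$). A rank two filtered $(\varphi,N,L/K,E)$-module is a free $E^f$-module $D$ of rank 2 with: an additive bijection $\varphi$ with $\varphi(ad)=\varphi(a)\varphi(d)$; a nilpotent $E^f$-linear $N$ with $N\varphi=p\varphi N$; a decreasing exhaustive separated filtration on $D_L=L\otimes_{L_0}D$; and an $E$-linear action of $G$ on $D$ with $g(ad)=g(a)g(d)$, commuting with $\varphi$ and $N$ and (after extension to $D_L$) preserving the filtration. Matrices: $(T\eta_1,T\eta_2)=(\eta_1,\eta_2)[T]_{\underline\eta}$. $D$ is F-semisimple / F-scalar / non-F-semisimple according as the $E^f$-linear map $\varphi^f$ is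 semisimple / a scalar in $E^\times$ / not semisimple. A standard basis is one in which $[\varphi]$ is $\mathrm{diag}(\alpha\cdot\vec1,\delta\cdot\vec1)$ with $\alpha^f\ne\delta^f$, or $\mathrm{diag}(\alpha\cdot\vec1,\alpha\cdot\vec1)$, or $\begin{pmatrix}\alpha\cdot\vec1&\vec0\\ \vec1&\alpha\cdot\vec1\end{pmatrix}$ ($\alpha,\delta\in E^\times$); when $N\ne0$ it is moreover chosen with $[\varphi]=\mathrm{diag}(p\delta\cdot\vec1,\delta\cdot\vec1)$ and $[N]=\begin{pmatrix}\vec0&\vec0\\ \vec1&\vec0\end{pmatrix}$. $c\cdot\vec1=(c,\dots,c)$. *)

From HB Require Import structures.
From mathcomp Require Import all_boot all_order all_algebra all_fingroup.
Set Implicit Arguments. Unset Strict Implicit. Unset Printing Implicit Defensive.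
Import Order.TTheory GRing.Theory Num.Theory.
Local Open Scope ring_scope.

(* Coordinate model of a free rank-two E^f-module D with basis (eta_1, eta_2):
   an element  a_1 eta_1 + a_2 eta_2  (a_r in E^f = E x ... x E) is stored as
   the matrix d : 'M[E]_(2, f) with  d r j = j-th component of a_r.
   Elements of E^f are functions 'I_f -> E (componentwise ring structure). *)
Section Model.
Variables (E : fieldType) (f : nat).

Definition Dmod := 'M[E]_(2, f).

(* the shift sigma_k on E^f : (sigma_k a)_j = a_{j+k mod f};
   sigma_1 is phi(x_0,...,x_{f-1}) = (x_1,...,x_{f-1},x_0). *)
Definition shiftEf (k : nat) (a : 'I_f -> E) : 'I_f -> E :=
  fun j => a (insubd j ((j + k) %% f)%N).

Definition smulD (a : 'I_f -> E) (d : Dmod) : Dmod := \matrix_(r, j) (a j * d r j).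

Definition eta (s : 'I_2) : Dmod := \matrix_(r, j) ((r == s)%:R : E).

(* matrix [T]_eta over E^f:  T eta_s = sum_r [T]_{r s} eta_r ;
   matD T r s j = j-th component of [T]_{r s}. *)
Definition matD (T : Dmod -> Dmod) (r s : 'I_2) (j : 'I_f) : E := T (eta s) r j.

Definition semilinD (k : nat) (T : Dmod -> Dmod) : Prop :=
  (forall d1 d2, T (d1 + d2) = T d1 + T d2) /\
  (forall a d, T (smulD a d) = smulD (shiftEf k a) (T d)).

(* Rank two (phi, N, G, E)-module structure on D (filtration omitted).
   The group G is the whole finite group gT; n g in {0..f-1} with
   g|_{L_0} = tau^{n g}; G acts on E^f through shiftEf (n g). *)
Definition is_phiNG_module (p : nat) (gT : finGroupType) (n : gT -> nat)
    (phi N : Dmod -> Dmod) (act : gT -> Dmod -> Dmod) : Prop :=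
  [/\ semilinD 1 phi /\ bijective phi,
      semilinD 0 N /\ (exists k, forall d, iter k N d = 0),
      (forall d, N (phi d) = p%:R *: phi (N d)),
      (forall g, semilinD (n g) (act g)) /\
        (forall d, act 1%g d = d) /\
        (forall g h d, act (g * h)%g d = act g (act h d)) &
      (forall g d, act g (phi d) = phi (act g d)) /\
        (forall g d, act g (N d) = N (act g d))].

Definition invariant_sp (T : Dmod -> Dmod) (U : {vspace Dmod}) : Prop :=
  forall u, u \in U -> T u \in U.

Definition semisimple_endo (T : Dmod -> Dmod) : Prop :=
  forall U : {vspace Dmod}, invariant_sp T U ->
    exists W : {vspace Dmod},
      [/\ invariant_sp T W, (U :&: W)%VS = 0%VS & (U + W)%VS = fullv].

Definition F_semisimple (phi : Dmod -> Dmod) : Prop := semisimple_endo (iter f phi).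

Definition F_scalar (phi : Dmod -> Dmod) : Prop :=
  exists c : E, c != 0 /\ forall d, iter f phi d = c *: d.

Definition Nzero (N : Dmod -> Dmod) : Prop := forall d, N d = 0.

Definition std_diag2 (phi : Dmod -> Dmod) : Prop :=
  exists alpha delta : E, [/\ alpha != 0, delta != 0, alpha ^+ f != delta ^+ f &
    forall r s j, matD phi r s j =
      if r == s then (if r == 0 then alpha else delta) else 0].

Definition std_scalar (phi : Dmod -> Dmod) : Prop :=
  exists alpha : E, alpha != 0 /\
    forall r s j, matD phi r s j = if r == s then alpha else 0.

Definition std_nonss (phi : Dmod -> Dmod) : Prop :=
  exists alpha : E, alpha != 0 /\
    forall r s j, matD phi r s j =
      if r == s then alpha else if (r == 1) && (s == 0) then 1 else 0.

(* the choice of Corollary 2.6 when N <> 0 *)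
Definition std_monodromy (p : nat) (phi N : Dmod -> Dmod) : Prop :=
  exists delta : E, delta != 0 /\
    (forall r s j, matD phi r s j =
        if r == s then (if r == 0 then p%:R * delta else delta) else 0) /\
    (forall r s j, matD N r s j = if (r == 1) && (s == 0) then 1 else 0).

Definition standard_basis (p : nat) (phi N : Dmod -> Dmod) : Prop :=
  (std_diag2 phi \/ std_scalar phi \/ std_nonss phi) /\
  (~ Nzero N -> std_monodromy p phi N).

End Model.

Definition is_character (E : fieldType) (gT : finGroupType) (chi : gT -> E) : Prop :=
  (forall g, chi g != 0) /\ (forall g h, chi (g * h)%g = chi g * chi h).

Definition is_GL2_hom (E : fieldType) (gT : finGroupType) (lam : gT -> 'M[E]_2) : Prop :=
  (forall g, lam g \in unitmx) /\ (forall g h, lam (g * h)%g = lam g *m lam h).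

From Pilot Require Import Defs.
From HB Require Import structures.
From mathcomp Require Import all_boot all_order all_algebra all_fingroup.
Import Order.TTheory GRing.Theory Num.Theory.
Local Open Scope ring_scope.
Set Implicit Arguments. Unset Strict Implicit.

(* Write A = [g] and P = [phi] for the matrices (over E^f) in the standard
   basis.  As g commutes with phi, A sigma_{n g}(P) = P sigma(A); since P has
   constant entries this is an entrywise twisted recurrence in the coordinate
   j of E^f = E^{Z/f}, which we solve by going around the cycle Z/f
   (twist_zero, twist_add; the latter uses char E = 0):
   - P = diag(a, b), a^f <> b^f : A is diagonal with constant entries;
   - P = a * 1 : A has constant entries;
   - P = [[a, 0], [1, a]] : A is constant, lower triangular, equal diagonal.
   Constant matrices [g] form a homomorphism G -> GL_2(E) (act_hom_of_const);
   in the last case g |-> A_10 / A_00 is an additive character of the finite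
   group G, hence 0.  If N <> 0, commuting with N = [[0, 0], [1, 0]] makes the
   two diagonal characters equal.  Finally the F-type is read off the standard
   form: for P = diag(a, b), phi^f scales the two rows by a^f and b^f, which
   is semisimple, and scalar only if a^f = b^f. *)

Lemma ord2E (r : 'I_2) : r = 0 \/ r = 1.
Proof. by case: r => [[|[|//]]] Hr; [left|right]; apply/val_inj. Qed.

Lemma sum2 (V : nmodType) (F : 'I_2 -> V) : \sum_(s < 2) F s = F 0 + F 1.
Proof.
rewrite big_ord_recr big_ord_recr big_ord0 /= add0r.
by congr (F _ + F _); apply/val_inj.
Qed.

Section CyclicShift.
Variable f : nat.
Implicit Type j : 'I_f.

Definition sh (k : nat) j : 'I_f := insubd j ((j + k) %% f)%N.

Lemma sh_val k j : val (sh k j) = ((j + k) %% f)%N.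
Proof. by rewrite /sh val_insubd ltn_pmod // (leq_ltn_trans _ (ltn_ord j)). Qed.

Lemma sh0 j : sh 0 j = j.
Proof. by apply/val_inj; rewrite sh_val addn0 modn_small. Qed.

Lemma sh_add k m j : sh m (sh k j) = sh (k + m) j.
Proof. by apply/val_inj; rewrite !sh_val modnDml addnA. Qed.

Lemma shf j : sh f j = j.
Proof. by apply/val_inj; rewrite sh_val modnDr modn_small. Qed.

Lemma sh1_invariant_const (T : Type) (c : 'I_f -> T) :
  (forall j, c (sh 1 j) = c j) -> forall j j', c j = c j'.
Proof.
move=> c_sh1.
have c_sh : forall k j, c (sh k j) = c j.
  by elim=> [|k IH] j; rewrite ?sh0 // -addn1 -sh_add c_sh1 IH.
have f_gt0 j : (0 < f)%N by apply: leq_ltn_trans (ltn_ord j).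
have c_0 j : c j = c (Ordinal (f_gt0 j)).
  by rewrite -(c_sh j (Ordinal (f_gt0 j))); congr c; apply/val_inj;
     rewrite sh_val add0n modn_small.
move=> j j'; rewrite c_0 [RHS]c_0; congr (c _); exact/val_inj.
Qed.

End CyclicShift.

Section TwistedRecurrences.
Variables (E : fieldType) (f : nat).
Hypothesis f_gt0 : (0 < f)%N.
Implicit Type x : 'I_f -> E.

(* Going once around the cycle Z/f: a twisted-periodic sequence
   a x_j = b x_{j+1} with a^f <> b^f must vanish. *)
Lemma twist_zero x (a b : E) :
  a ^+ f != b ^+ f -> (forall j, a * x j = b * x (sh 1 j)) -> forall j, x j = 0.
Proof.
move=> neq_ab rec.
have rec_k : forall k j, a ^+ k * x j = b ^+ k * x (sh k j).
  elim=> [|k IH] j; first by rewrite sh0 !mul1r.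
  by rewrite exprSr -mulrA rec mulrCA IH mulrA -exprS sh_add add1n.
move=> j; apply/eqP; have /eqP := rec_k f j.
by rewrite shf -subr_eq0 -mulrBl mulf_eq0 subr_eq0 (negbTE neq_ab).
Qed.

(* In characteristic 0, a x_j = c + a x_{j+1} forces c = 0 (sum c f times
   around the cycle), and then x is constant. *)
Lemma twist_add x (a c : E) :
  [pchar E] =i pred0 -> a != 0 ->
  (forall j, a * x j = c + a * x (sh 1 j)) -> c = 0 /\ forall j j', x j = x j'.
Proof.
move=> char0 a_neq0 rec.
have rec_k : forall k j, a * x j = k%:R * c + a * x (sh k j).
  elim=> [|k IH] j; first by rewrite sh0 mul0r add0r.
  by rewrite IH rec sh_add addn1 addrA -natr1 mulrDl mul1r.
have c0 : c = 0.
  have /eqP := rec_k f (Ordinal f_gt0).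
  rewrite shf eq_sym -subr_eq0 addrK mulf_eq0 => /orP [|/eqP //].
  by move/pcharf0P: char0 => -> /eqP f0; move: f_gt0; rewrite f0.
split=> //; apply: sh1_invariant_const => j.
by apply/(mulfI a_neq0); rewrite [RHS]rec c0 add0r.
Qed.

End TwistedRecurrences.

Section Coordinates.
Variables (E : fieldType) (f : nat).
Local Notation D := (Dmod E f).

Lemma matD_apply k (T : D -> D) :
  semilinD k T -> forall d r j, T d r j = \sum_s d s (sh k j) * matD T r s j.
Proof.
move=> [T_add T_smul] d r j.
have d_eta : d = smulD (fun j => d 0 j) (Defs.eta E f 0) +
                 smulD (fun j => d 1 j) (Defs.eta E f 1).
  apply/matrixP => r' j'; rewrite !mxE.
  by case: (ord2E r') => ->; rewrite /= ?mulr1 ?mulr0 ?addr0 ?add0r.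
by rewrite {1}d_eta T_add !T_smul sum2 !mxE.
Qed.

Lemma matD_comp m (T1 T2 T : D -> D) :
  semilinD m T1 -> (forall d, T d = T1 (T2 d)) ->
  forall r s j, matD T r s j = \sum_t matD T2 t s (sh m j) * matD T1 r t j.
Proof. by move=> T1_sl TE r s j; rewrite /matD TE (matD_apply T1_sl). Qed.

Lemma matD_comm m1 m2 (T1 T2 : D -> D) :
  semilinD m1 T1 -> semilinD m2 T2 -> (forall d, T1 (T2 d) = T2 (T1 d)) ->
  forall r s j, \sum_t matD T2 t s (sh m1 j) * matD T1 r t j =
                \sum_t matD T1 t s (sh m2 j) * matD T2 r t j.
Proof.
move=> T1_sl T2_sl T12 r s j.
rewrite -(matD_comp T1_sl (fun d => erefl)) -(matD_comp T2_sl (fun d => erefl)).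
by rewrite /matD T12.
Qed.

End Coordinates.

Section RowScaling.
Variables (E : fieldType) (f : nat).
Local Notation D := (Dmod E f).

(* [rowproj i] is the E-linear projection of D onto its summand E^f eta_i;
   [rowsp i] is that summand, the space of vectors fixed by [rowproj i]. *)
Definition rowproj (i : 'I_2) (d : D) : D := delta_mx i i *m d.

Definition rowsp (i : 'I_2) : {vspace D} :=
  lker (linfun (mulmx (1%:M - delta_mx i i : 'M[E]_2))).

Lemma mem_rowsp i v : (v \in rowsp i) = (rowproj i v == v).
Proof. by rewrite memv_ker lfunE /= mulmxBl mul1mx subr_eq0 eq_sym. Qed.

Lemma rowproj_split d : d = rowproj 0 d + rowproj 1 d.
Proof.
apply/matrixP => r j; rewrite !mxE !sum2 !mxE.
by case: (ord2E r) => -> /=; rewrite !(mulr0, mul0r, mulr1, mul1r, addr0, add0r).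
Qed.

Lemma rowproj_rowsp i d : rowproj i d \in rowsp i.
Proof. by rewrite mem_rowsp /rowproj mulmxA mul_delta_mx. Qed.

Lemma rowproj_on i k v : v \in rowsp i -> rowproj k v = if k == i then v else 0.
Proof.
rewrite mem_rowsp => /eqP <-; rewrite /rowproj mulmxA.
by case: eqP => [->|/eqP ki]; rewrite ?mul_delta_mx // mul_delta_mx_0 ?mul0mx.
Qed.

Lemma rowproj_sum (V0 V1 : {vspace D}) w :
  (V0 <= rowsp 0%R)%VS -> (V1 <= rowsp 1%R)%VS -> w \in (V0 + V1)%VS ->
  rowproj 0 w \in V0 /\ rowproj 1 w \in V1.
Proof.
move=> /subvP V0sp /subvP V1sp /memv_addP [w0 w0V [w1 w1V ->]].
rewrite /rowproj !mulmxDr.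
rewrite -!/(rowproj _ _) !(rowproj_on _ (V0sp _ w0V)) !(rowproj_on _ (V1sp _ w1V)).
by rewrite /= addr0 add0r.
Qed.

(* An endomorphism scaling the i-th row by c i is semisimple: an invariant U
   is stable under the projections rowproj i (polynomials in T when
   c 0 <> c 1), and the sum of complements of U in each row space is an
   invariant complement of U. *)
Lemma rowscale_semisimple (c : 'I_2 -> E) (T : D -> D) :
  (forall d r j, T d r j = c r * d r j) -> semisimple_endo T.
Proof.
move=> TE U TU.
have T_split d : T d = c 0 *: rowproj 0 d + c 1 *: rowproj 1 d.
  apply/matrixP => r j; rewrite TE !mxE !sum2 !mxE.
  by case: (ord2E r) => -> /=; rewrite !(mulr0, mul0r, mulr1, mul1r, addr0, add0r).
case: (eqVneq (c 0) (c 1)) => [c01|c01].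
  (* T is a scalar, so any complement of U will do *)
  exists U^C%VS; split; [|exact: capv_compl|exact: addv_complf].
  by move=> w wU; rewrite T_split c01 -scalerDr -rowproj_split memvZ.
have proj_U i u : u \in U -> rowproj i u \in U.
  move=> uU; have [-> | ->] := ord2E i.
  - have -> : rowproj 0 u = (c 0 - c 1)^-1 *: (T u - c 1 *: u).
      rewrite T_split {4}(rowproj_split u) (scalerDr (c 1)) opprD addrACA subrr addr0.
      by rewrite -scalerBl scalerA mulVf ?subr_eq0 ?scale1r.
    by rewrite memvZ // memvB // ?TU // memvZ.
  - have -> : rowproj 1 u = (c 1 - c 0)^-1 *: (T u - c 0 *: u).
      rewrite T_split {4}(rowproj_split u) (scalerDr (c 0)) opprD addrACA subrr add0r.
      by rewrite -scalerBl scalerA mulVf ?scale1r // subr_eq0 eq_sym.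
    by rewrite memvZ // memvB // ?TU // memvZ.
pose W := ((rowsp 0%R :\: U) + (rowsp 1%R :\: U))%VS.
have proj_W (w : D) : w \in W -> rowproj 0 w \in (rowsp 0%R :\: U)%VS /\
                            rowproj 1 w \in (rowsp 1%R :\: U)%VS.
  by rewrite /W => wW; apply: (rowproj_sum _ _ wW); apply: diffvSl.
have rowsp_UW i : (rowsp i <= U + W)%VS.
  rewrite -{1}(addv_diff_cap (rowsp i) U) subv_add; apply/andP; split.
    apply: subv_trans (addvSr U W); case: (ord2E i) => ->; [exact: addvSl|exact: addvSr].
  exact: subv_trans (capvSr _ _) (addvSl U W).
exists W; split.
- move=> w /proj_W [w0 w1]; rewrite T_split.
  by apply: memv_add; apply: memvZ.
- apply/eqP; rewrite -subv0; apply/subvP => x /memv_capP [xU /proj_W [x0 x1]].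
  have proj0 i y : y \in (rowsp i :\: U)%VS -> y \in U -> y = 0.
    move=> yd yU; apply/eqP; rewrite -memv0 -(capv_diff (rowsp i) U).
    by apply/memv_capP.
  rewrite (rowproj_split x) (proj0 _ _ x0 (proj_U _ _ xU)).
  by rewrite (proj0 _ _ x1 (proj_U _ _ xU)) addr0 mem0v.
- apply/eqP; rewrite eqEsubv subvf /=; apply/subvP => d _.
  by rewrite (rowproj_split d); apply: memvD; apply: (subvP (rowsp_UW _));
     apply: rowproj_rowsp.
Qed.

End RowScaling.

Definition diag_form (E : fieldType) (f : nat) (T : Dmod E f -> Dmod E f)
    (c : 'I_2 -> E) : Prop :=
  forall r s j, matD T r s j = if r == s then c r else 0.

Section FrobeniusPower.
Variables (E : fieldType) (f : nat) (phi : Dmod E f -> Dmod E f).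
Hypothesis phi_sl : semilinD 1 phi.

Lemma iter_diag c : diag_form phi c ->
  forall k d r j, iter k phi d r j = c r ^+ k * d r (sh k j).
Proof.
move=> phiE; elim=> [|k IH] d r j; first by rewrite expr0 mul1r sh0.
rewrite iterS (matD_apply phi_sl) sum2 !phiE !IH sh_add add1n.
by case: (ord2E r) => -> /=; rewrite ?mulr0 ?addr0 ?add0r exprS mulrC mulrA.
Qed.

(* A diagonal standard form is F-semisimple, as phi^f is a row scaling. *)
Lemma diag_F_semisimple c : diag_form phi c -> F_semisimple phi.
Proof.
move=> phiE; apply: (@rowscale_semisimple _ _ (fun r => c r ^+ f)) => d r j.
by rewrite (iter_diag phiE) shf.
Qed.

Lemma diag_not_F_scalar c : (0 < f)%N -> c 0 ^+ f != c 1 ^+ f ->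
  diag_form phi c -> ~ F_scalar phi.
Proof.
move=> f_gt0 c_neq phiE [a [_ phifE]].
have entry r : c r ^+ f = a.
  have := congr1 (fun M : Dmod E f => M r (Ordinal f_gt0)) (phifE (Defs.eta E f r)).
  by rewrite /= (iter_diag phiE) !mxE eqxx !mulr1.
by move/eqP: c_neq; rewrite !entry.
Qed.

Lemma scalar_F_scalar a : a != 0 -> diag_form phi (fun _ => a) -> F_scalar phi.
Proof.
move=> a_neq0 phiE; exists (a ^+ f); split; first by rewrite expf_neq0.
by move=> d; apply/matrixP=> r j; rewrite (iter_diag phiE) shf mxE.
Qed.

End FrobeniusPower.

Section Commutant.
Variables (E : fieldType) (f m : nat) (phi A : Dmod E f -> Dmod E f).
Hypotheses (char0 : [pchar E] =i pred0) (f_gt0 : (0 < f)%N).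
Hypotheses (phi_sl : semilinD 1 phi) (A_sl : semilinD m A).
Hypothesis A_phi : forall d, A (phi d) = phi (A d).

Lemma diag_commute_entry c r s j : diag_form phi c ->
  c s * matD A r s j = c r * matD A r s (sh 1 j).
Proof.
move=> phiE; have := matD_comm A_sl phi_sl A_phi r s j; rewrite !sum2 !phiE.
by case: (ord2E r) => ->; case: (ord2E s) => -> /=;
  rewrite !(mulr0, mul0r, addr0, add0r) => ->; rewrite mulrC.
Qed.

Lemma diag_commutant_const c r s : diag_form phi c -> c r = c s -> c r != 0 ->
  forall j j', matD A r s j = matD A r s j'.
Proof.
move=> phiE crs cr_neq0.
apply: (proj2 (@twist_add _ _ f_gt0 (fun j => matD A r s j) _ 0 char0 cr_neq0 _)).
by move=> j; rewrite add0r {1}crs diag_commute_entry.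
Qed.

Lemma diag_commutant_zero c r s : diag_form phi c -> c s ^+ f != c r ^+ f ->
  forall j, matD A r s j = 0.
Proof.
move=> phiE neq; apply: (twist_zero (x := fun j => matD A r s j) neq) => j.
exact: diag_commute_entry.
Qed.

(* [phi] = [[a, 0], [1, a]] (non-F-semisimple standard form): every entry of
   [A] is constant, [A] is lower triangular and has equal diagonal entries;
   each step solves a twisted recurrence a x_j = c + a x_(j+1). *)
Lemma nonss_commutant (a : E) : a != 0 ->
  (forall r s j, matD phi r s j =
      if r == s then a else if (r == 1) && (s == 0) then 1 else 0) ->
  (forall r s j j', matD A r s j = matD A r s j') /\
  (forall j, matD A 0 1 j = 0 /\ matD A 1 1 j = matD A 0 0 j).
Proof.
move=> a_neq0 phiE; pose j0 := Ordinal f_gt0.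
have entry r s j := matD_comm A_sl phi_sl A_phi r s j.
have twist r s (c : E) := @twist_add _ _ f_gt0 (fun j => matD A r s j) a c char0 a_neq0.
have A01_const : forall j j', matD A 0 1 j = matD A 0 1 j'.
  apply: (proj2 (twist 0 1 0 _)) => j; move: (entry 0 1 j); rewrite !sum2 !phiE /=.
  by rewrite !(mulr0, mul0r, addr0, add0r, mulr1, mul1r) => ->; rewrite mulrC.
have [A01_0 A11_const] : matD A 0 1 j0 = 0 /\
    (forall j j', matD A 1 1 j = matD A 1 1 j').
  apply: twist => j; move: (entry 1 1 j); rewrite !sum2 !phiE /=.
  rewrite !(mulr0, mul0r, addr0, add0r, mulr1, mul1r) => ->.
  by rewrite mulrC (A01_const (sh 1 j) j0).
have A01_zero j : matD A 0 1 j = 0 by rewrite (A01_const j j0).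
have A00_const : forall j j', matD A 0 0 j = matD A 0 0 j'.
  apply: (proj2 (twist 0 0 0 _)) => j; move: (entry 0 0 j); rewrite !sum2 !phiE /=.
  rewrite !(mulr0, mul0r, addr0, add0r, mulr1, mul1r) A01_zero addr0 => ->.
  by rewrite mulrC.
have [diag_eq A10_const] : matD A 0 0 j0 - matD A 1 1 j0 = 0 /\
    (forall j j', matD A 1 0 j = matD A 1 0 j').
  apply: twist => j; move: (entry 1 0 j); rewrite !sum2 !phiE /=.
  rewrite !(mulr0, mul0r, addr0, add0r, mulr1, mul1r) => e.
  rewrite -[LHS](addrK (matD A 1 1 j)) e.
  by rewrite (A00_const (sh 1 j) j0) (A11_const j j0) addrAC mulrC.
split=> [r s|j].
  by case: (ord2E r) => ->; case: (ord2E s) => ->.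
split=> //; rewrite (A11_const j j0) (A00_const j j0).
by apply/eqP; rewrite eq_sym -subr_eq0 diag_eq.
Qed.

End Commutant.

Section GL2Homomorphisms.
Variables (E : fieldType) (gT : finGroupType) (M : gT -> 'M[E]_2).
Hypothesis M_hom : is_GL2_hom M.

Lemma GL2_hom1 : M 1%g = 1.
Proof.
have [M_unit MM] := M_hom; apply: (can_inj (mulKmx (M_unit 1%g))).
by rewrite -MM mulg1 mulmx1.
Qed.

Lemma lower_triangular_characters : (forall g, M g 0 1 = 0) ->
  is_character (fun g => M g 0 0) /\ is_character (fun g => M g 1 1).
Proof.
move=> M01; have MM := M_hom.2.
have diag_mul i g h : M (g * h)%g i i = M g i i * M h i i.
  rewrite MM mxE sum2.
  by case: (ord2E i) => ->; rewrite M01 ?(mul0r, mulr0, addr0, add0r).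
have diag_neq0 i g : M g i i != 0.
  apply/eqP => Mg0; have := diag_mul i g g^-1%g.
  by rewrite mulgV GL2_hom1 Mg0 mul0r mxE eqxx => /eqP; rewrite oner_eq0.
by split; split; [exact: diag_neq0|exact: diag_mul|exact: diag_neq0|exact: diag_mul].
Qed.

(* A homomorphism from a finite group to the additive group of a field of
   characteristic 0 is trivial: u (g ^ #[g]) = #[g] u g = 0. *)
Lemma additive_char0_trivial (u : gT -> E) : [pchar E] =i pred0 ->
  (forall g h, u (g * h)%g = u g + u h) -> forall g, u g = 0.
Proof.
move=> char0 uM.
have u1 : u 1%g = 0 by apply/(addrI (u 1%g)); rewrite -uM mulg1 addr0.
have uX g k : u (g ^+ k)%g = k%:R * u g.
  elim: k => [|k IH]; first by rewrite expg0 u1 mul0r.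
  by rewrite expgS uM IH -natr1 mulrDl mul1r addrC.
move=> g; have /esym/eqP := uX g #[g]%g.
rewrite expg_order u1 mulf_eq0 => /orP [|/eqP //].
by move/pcharf0P: char0 => -> /eqP ord0; have := order_gt0 g; rewrite ord0.
Qed.

(* A lower triangular representation with equal diagonal characters is
   diagonal: g |-> M_10 / M_00 is then an additive character of G. *)
Lemma unipotent_part_trivial : [pchar E] =i pred0 ->
  (forall g, M g 0 1 = 0) -> (forall g, M g 1 1 = M g 0 0) -> forall g, M g 1 0 = 0.
Proof.
move=> char0 M01 M11.
have [[M00_neq0 _] _] := lower_triangular_characters M01.
pose u g := M g 1 0 / M g 0 0.
have uM g h : u (g * h)%g = u g + u h.
  rewrite /u M_hom.2 !mxE !sum2 M01 !M11 mul0r addr0 mulrDl invfM.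
  rewrite (mulrACA (M g 1 0)) (mulrACA (M g 0 0)).
  by rewrite !mulfV ?M00_neq0 // mulr1 mul1r.
move=> g; have /eqP := additive_char0_trivial char0 uM g.
by rewrite mulf_eq0 invr_eq0 (negbTE (M00_neq0 g)) orbF => /eqP.
Qed.

End GL2Homomorphisms.

Lemma scalar_GL2_hom (E : fieldType) (gT : finGroupType) (chi : gT -> E) :
  is_character chi -> is_GL2_hom (fun g => (chi g)%:M : 'M[E]_2).
Proof.
move=> [chi_neq0 chiM]; split=> [g|g h]; last by rewrite chiM scalar_mxM.
by rewrite unitmxE det_scalar unitfE expf_neq0.
Qed.

Section StandardForms.
Variables (E : fieldType) (f : nat) (gT : finGroupType) (n : gT -> nat).
Variables (phi : Dmod E f -> Dmod E f) (act : gT -> Dmod E f -> Dmod E f).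
Hypotheses (char0 : [pchar E] =i pred0) (f_gt0 : (0 < f)%N).
Hypotheses (phi_sl : semilinD 1 phi) (act_sl : forall g, semilinD (n g) (act g)).
Hypotheses (act1 : forall d, act 1%g d = d)
           (actM : forall g h d, act (g * h)%g d = act g (act h d)).
Hypothesis act_phi : forall g d, act g (phi d) = phi (act g d).

Lemma act_hom_of_const :
  (forall g r s j j', matD (act g) r s j = matD (act g) r s j') ->
  exists M : gT -> 'M[E]_2,
    is_GL2_hom M /\ forall g r s j, matD (act g) r s j = M g r s.
Proof.
move=> act_const; pose j0 := Ordinal f_gt0.
pose M g : 'M[E]_2 := \matrix_(r, s) matD (act g) r s j0.
have actE g r s j : matD (act g) r s j = M g r s.
  by rewrite mxE (act_const g r s j j0).
have M1 : M 1%g = 1.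
  by apply/matrixP => r s; rewrite -(actE _ r s j0) /matD act1 !mxE eq_sym.
have MM g h : M (g * h)%g = M g *m M h.
  apply/matrixP => r s; rewrite -(actE _ r s j0) (matD_comp (act_sl g) (actM g h)) mxE.
  by apply: eq_bigr => t _; rewrite !actE mulrC.
exists M; split=> //; split=> // g.
have M_inv : M g *m M g^-1%g = 1%:M by rewrite -MM mulgV M1.
by case/mulmx1_unit: M_inv.
Qed.

Lemma diag_action (a b : E) : a != 0 -> b != 0 -> a ^+ f != b ^+ f ->
  diag_form phi (fun r => if r == 0 then a else b) ->
  exists chi psi : gT -> E, [/\ is_character chi, is_character psi &
    forall g, diag_form (act g) (fun r => if r == 0 then chi g else psi g)].
Proof.
move=> a_neq0 b_neq0 ab_neq phiE.
have c_neq0 (r : 'I_2) : (if r == 0 then a else b) != 0 by case: ifP.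
have off_diag g j : matD (act g) 0 1 j = 0 /\ matD (act g) 1 0 j = 0.
  by split; apply: (diag_commutant_zero phi_sl (act_sl g) (act_phi g) phiE);
     rewrite //= eq_sym.
have diag g r j j' : matD (act g) r r j = matD (act g) r r j'.
  exact: (diag_commutant_const char0 f_gt0 phi_sl (act_sl g) (act_phi g) phiE
            erefl (c_neq0 r)).
have [M [M_hom actE]] : exists M : gT -> 'M[E]_2,
    is_GL2_hom M /\ forall g r s j, matD (act g) r s j = M g r s.
  apply: act_hom_of_const => g r s j j'.
  case: (ord2E r) => ->; case: (ord2E s) => ->; rewrite ?diag //;
    by rewrite !(proj1 (off_diag _ _), proj2 (off_diag _ _)).
have M_off g : M g 0 1 = 0 /\ M g 1 0 = 0.
  by rewrite -!(actE g _ _ (Ordinal f_gt0)); apply: off_diag.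
have [chi psi] := lower_triangular_characters M_hom (fun g => (M_off g).1).
exists (fun g => M g 0 0), (fun g => M g 1 1); split=> // g r s j; rewrite actE.
by have [M01 M10] := M_off g; case: (ord2E r) => ->; case: (ord2E s) => ->.
Qed.

Lemma scalar_action a : a != 0 -> diag_form phi (fun _ => a) ->
  exists lam : gT -> 'M[E]_2,
    is_GL2_hom lam /\ forall g r s j, matD (act g) r s j = lam g r s.
Proof.
move=> a_neq0 phiE; apply: act_hom_of_const => g r s.
exact: (diag_commutant_const char0 f_gt0 phi_sl (act_sl g) (act_phi g) phiE
          erefl a_neq0).
Qed.

Lemma nonss_action : std_nonss phi ->
  exists chi : gT -> E,
    is_character chi /\ forall g, diag_form (act g) (fun _ => chi g).
Proof.
case=> a [a_neq0 phiE].
have comm g := nonss_commutant char0 f_gt0 phi_sl (act_sl g) (act_phi g) a_neq0 phiE.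
have [M [M_hom actE]] := act_hom_of_const (fun g => (comm g).1).
have M_entry g : M g 0 1 = 0 /\ M g 1 1 = M g 0 0.
  by rewrite -!(actE g _ _ (Ordinal f_gt0)); apply: (comm g).2.
have M10 := unipotent_part_trivial M_hom char0 (fun g => (M_entry g).1)
  (fun g => (M_entry g).2).
have [chi _] := lower_triangular_characters M_hom (fun g => (M_entry g).1).
exists (fun g => M g 0 0); split=> // g r s j; rewrite actE.
have [M01 M11] := M_entry g.
by case: (ord2E r) => ->; case: (ord2E s) => ->; rewrite ?M10.
Qed.

Lemma monodromy_equal_characters (N : Dmod E f -> Dmod E f) (chi psi : gT -> E) :
  semilinD 0 N -> (forall g d, act g (N d) = N (act g d)) ->
  (forall r s j, matD N r s j = if (r == 1) && (s == 0) then 1 else 0) ->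
  (forall g, diag_form (act g) (fun r => if r == 0 then chi g else psi g)) ->
  forall g, psi g = chi g.
Proof.
move=> N_sl act_N NE actE g.
have := matD_comm (act_sl g) N_sl (act_N g) 1 0 (Ordinal f_gt0).
by rewrite !sum2 !NE !actE /= !(mulr0, mul0r, addr0, add0r, mulr1, mul1r).
Qed.

End StandardForms.

(* The slopes of the monodromy standard form are distinct after f-th powers:
   (p delta)^f <> delta^f in characteristic 0. *)
Lemma scaled_power_neq (E : fieldType) (p f : nat) (d : E) :
  (1 < p)%N -> [pchar E] =i pred0 -> (0 < f)%N -> d != 0 ->
  (p%:R * d) ^+ f != d ^+ f.
Proof.
move=> p_gt1 /pcharf0P char0 f_gt0 d_neq0; apply/eqP => eq_pow.
have pf1 : ((p ^ f)%:R : E) = 1.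
  by apply: (mulIf (expf_neq0 f d_neq0)); rewrite mul1r natrX -exprMn.
have /eqP : ((p ^ f - 1)%:R : E) = 0.
  by rewrite natrB ?expn_gt0 ?(ltnW p_gt1) // pf1 subrr.
rewrite char0 subn_eq0 leqNgt => /negP; apply.
exact: leq_trans p_gt1 (leq_pexp2l (ltnW p_gt1) f_gt0).
Qed.

Unset Implicit Arguments.

Theorem proposition2p7 (E : fieldType) (p f : nat) (gT : finGroupType)
  (n : gT -> nat) (phi N : Dmod E f -> Dmod E f) (act : gT -> Dmod E f -> Dmod E f) :
  prime p -> [pchar E] =i pred0 -> (0 < f)%N ->
  (forall g, (n g < f)%N) -> (forall g h, n (g * h)%g = ((n g + n h) %% f)%N) ->
  is_phiNG_module p n phi N act ->
  standard_basis p phi N ->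
  (* (1) F-semisimple, not F-scalar *)
  (F_semisimple phi -> ~ F_scalar phi ->
     (~ Nzero N -> exists chi : gT -> E, is_character chi /\
        forall g r s j, matD (act g) r s j = if r == s then chi g else 0) /\
     (Nzero N -> exists chi psi : gT -> E, is_character chi /\ is_character psi /\
        forall g r s j, matD (act g) r s j =
          if r == s then (if r == 0 then chi g else psi g) else 0)) /\
  (* (2) F-scalar *)
  (F_scalar phi -> exists lam : gT -> 'M[E]_2, is_GL2_hom lam /\
        forall g r s j, matD (act g) r s j = lam g r s) /\
  (* (3) non-F-semisimple *)
  (~ F_semisimple phi -> exists chi : gT -> E, is_character chi /\
        forall g r s j, matD (act g) r s j = if r == s then chi g else 0).
Proof.
move=> /prime_gt1 p_gt1 char0 f_gt0 _ _
  [[phi_sl _] [N_sl _] _ [act_sl [act1 actM]] [act_phi act_N]] [std mono].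
have diag_act := diag_action char0 f_gt0 phi_sl act_sl act1 actM act_phi.
have nonss_act := nonss_action char0 f_gt0 phi_sl act_sl act1 actM act_phi.
split; [move=> Fss not_Fsc; split | split].
- move=> N_neq0; have [d [d_neq0 [phiE NE]]] := mono N_neq0.
  have pd_neq0 : p%:R * d != 0.
    by rewrite mulf_neq0 // ((pcharf0P _).1 char0) -lt0n ltnW.
  have [chi [psi [chi_ch _ actE]]] :=
    diag_act _ _ pd_neq0 d_neq0 (scaled_power_neq p_gt1 char0 f_gt0 d_neq0) phiE.
  have psi_chi := monodromy_equal_characters f_gt0 act_sl N_sl act_N NE actE.
  by exists chi; split=> // g r s j; rewrite actE /= psi_chi if_same.
- move=> _; case: std => [[a [b [a0 b0 ab phiE]]] | [[a [a0 phiE]] | nonss]].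
  + by have [chi [psi [? ? ?]]] := diag_act a b a0 b0 ab phiE; exists chi, psi.
  + by case: not_Fsc; apply: (scalar_F_scalar phi_sl a0 phiE).
  + have [chi [chi_ch actE]] := nonss_act nonss.
    by exists chi, chi; do 2!split=> //; move=> g r s j; rewrite actE if_same.
- move=> Fsc; case: std => [[a [b [_ _ ab phiE]]] | [[a [a0 phiE]] | nonss]].
  + by case: (diag_not_F_scalar phi_sl f_gt0 ab phiE).
  + exact: (scalar_action char0 f_gt0 phi_sl act_sl act1 actM act_phi a0 phiE).
  + have [chi [chi_ch actE]] := nonss_act nonss.
    exists (fun g => (chi g)%:M); split; first exact: scalar_GL2_hom.
    by move=> g r s j; rewrite actE mxE; case: (r == s).
- move=> not_Fss; case: std => [[a [b [_ _ _ phiE]]] | [[a [_ phiE]] | nonss]].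
  + by case: not_Fss; apply: (diag_F_semisimple phi_sl phiE).
  + by case: not_Fss; apply: (diag_F_semisimple phi_sl phiE).
  + exact: nonss_act nonss.
Qed.
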